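(* Let $G$ be a countable amenable group and fix $A\subset G$. Suppose there exist a two-sided Følner sequence $\Phi$ on $G$ and a non-principal ultrafilter $\mathfrak{p}$ on $G$ such that $\mathsf{d}_\Phi(Ag^{-1}\cap A\mathfrak{p}^{-1})$ exists for all $g\in G$ and $$\lim_{g\to\mathfrak{p}}\mathsf{d}_\Phi(Ag^{-1}\cap A\mathfrak{p}^{-1})>0.$$ Then there exist infinite sets $B,C\subset G$ such that $BC\subset A$.
   Context: A two-sided Følner sequence on $G$ is a sequence $\Phi\colon N\mapsto\Phi_N$ of finite non-empty subsets of $G$ with $|(\Phi_Ng)\triangle\Phi_N|/|\Phi_N|\to0$ and $|\Phi_N\triangle(g\Phi_N)|/|\Phi_N|\to0$ for all $g\in G$. $\mathsf{d}_\Phi(E)=\lim_N|E\cap\Phi_N|/|\Phi_N|$ when it exists. For $g\in G$, $Ag^{-1}=\{h\in G: hg\in A\}$ and $g^{-1}A=\{h\in G: gh\in A\}$; for an ultrafilter $\mathfrak{p}$ on $G$, $A\mathfrak{p}^{-1}=\{g\in G: g^{-1}A\in\mathfrak{p}\}$. $\lim_{g\to\mathfrak{p}}$ denotes the ultrafilter limit of a bounded real-valued function on $G$. $BC=\{bc:b\in B,c\in C\}$. *)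

From HB Require Import structures.
From mathcomp Require Import all_boot all_order all_algebra.
From mathcomp Require Import finmap.
From mathcomp Require Import all_classical all_reals all_analysis.
From mathcomp Require Import Rstruct Rstruct_topology.
From Stdlib Require Import Reals.

Set Implicit Arguments.
Unset Strict Implicit.
Unset Printing Implicit Defensive.

Import Order.TTheory GRing.Theory Num.Theory.
Local Open Scope classical_set_scope.
Local Open Scope ring_scope.

Section Defs.
Variable G : groupType.
Local Open Scope group_scope.

Definition frtrans (F : {fset G}) (g : G) : {fset G} := [fset (x * g)%g | x in F]%fset.
Definition fltrans (g : G) (F : {fset G}) : {fset G} := [fset (g * x)%g | x in F]%fset.

Definition fsymdiff (X Y : {fset G}) : {fset G} := ((X `\` Y) `|` (Y `\` X))%fset.

Definition fratio (X Y : {fset G}) : R := ((#|` X|)%:R / (#|` Y|)%:R)%R.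

Definition two_sided_folner (Phi : nat -> {fset G}) : Prop :=
  (forall N, Phi N != fset0) /\
  (forall g : G,
     (fun N => fratio (fsymdiff (frtrans (Phi N) g) (Phi N)) (Phi N)) @ \oo --> (0 : R)) /\
  (forall g : G,
     (fun N => fratio (fsymdiff (Phi N) (fltrans g (Phi N))) (Phi N)) @ \oo --> (0 : R)).

(* (left) Følner sequence; for countable groups amenability is the existence of one *)
Definition left_folner (Phi : nat -> {fset G}) : Prop :=
  (forall N, Phi N != fset0) /\
  (forall g : G,
     (fun N => fratio (fsymdiff (Phi N) (fltrans g (Phi N))) (Phi N)) @ \oo --> (0 : R)).

Definition amenable : Prop := exists Phi, left_folner Phi.

Definition dens_seq (Phi : nat -> {fset G}) (E : set G) (N : nat) : R :=
  fratio [fset x in Phi N | `[< E x >] ]%fset (Phi N).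

Definition density_exists (Phi : nat -> {fset G}) (E : set G) : Prop :=
  cvgn (dens_seq Phi E).
Definition density (Phi : nat -> {fset G}) (E : set G) : R :=
  limn (dens_seq Phi E).

Definition rdiv (A : set G) (g : G) : set G := [set h | A (h * g)].
(* A p^{-1} = {g | g^{-1} A ∈ p},  g^{-1} A = {h | g h ∈ A} *)
Definition ultra_rdiv (A : set G) (p : set_system G) : set G :=
  [set g | p [set h | A (g * h)]].

Definition nonprincipal (p : set_system G) : Prop := forall g : G, ~ p [set g].

End Defs.

From HB Require Import structures.
From mathcomp Require Import all_boot all_order all_algebra.
From mathcomp Require Import finmap.
From mathcomp Require Import all_classical all_reals all_analysis.
From mathcomp Require Import Rstruct Rstruct_topology.
From Stdlib Require Import Reals.
From mathcomp Require Import ring lra.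
Import Order.TTheory GRing.Theory Num.Theory.
Local Open Scope classical_set_scope.
Local Open Scope ring_scope.
Set Implicit Arguments.
Unset Strict Implicit.
Unset Printing Implicit Defensive.

(* Write D = A p^-1 and S g = A g^-1 ∩ D. The ultralimit, along a non-principal
   ultrafilter q on nat, of the densities relative to Phi_N is a finitely additive
   content of total mass 1 on G; it agrees with d_Phi wherever d_Phi exists and,
   since |Phi_N| -> oo, it vanishes on finite sets. Call X large when its content
   inside S g is bounded below for p-almost every g. A large X meets some S c, for
   c in any prescribed p-large set, in a large set: otherwise one could pick
   c_1, ..., c_n whose sets X ∩ S c_i have content > d but pairwise overlaps
   <= d / 2n, so that their union would have content > n d / 2 > 1.
   D itself is large by hypothesis, so we can alternately choose c_n in the p-large
   set of c with b_i c in A for all i < n (this is where b_i in D is used) and b_n in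
   the large, hence infinite, set of x in D with x c_i in A for all i <= n. *)

Lemma ultra_fmap (T U : Type) (f : T -> U) (F : set_system T) :
  UltraFilter F -> UltraFilter (f @ F).
Proof.
move=> FU; split; first exact: fmap_proper_filter.
move=> H HF fFH; apply/seteqP; split=> [P HP|]; last exact: fFH.
have [//|FnP] := in_ultra_setVsetC (f @^-1` P) FU.
have /fFH HnP : (f @ F) (~` P) by [].
by have [x []] := filter_ex (filterI HP HnP).
Qed.

Lemma infinite_rectangle (T : choiceType) (r : T -> T -> Prop)
    (P : {fset T} * {fset T} -> Prop) :
  P (fset0, fset0) ->
  (forall s, P s -> {in s.1 & s.2, forall b c, r b c}) ->
  (forall s, P s -> exists b c,
     [/\ b \notin s.1, c \notin s.2 & P (b |` s.1, c |` s.2)%fset]) ->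
  exists B C : set T, [/\ infinite_set B, infinite_set C &
    forall b c, B b -> C c -> r b c].
Proof.
move=> P0 PR Pext.
pose grows s t := P s -> exists b c,
  [/\ b \notin s.1, c \notin s.2, t = (b |` s.1, c |` s.2)%fset & P t].
have [f [f0 f_grows]] :
    {f | f 0%N = (fset0, fset0) /\ forall n, grows (f n) (f n.+1)}.
  apply: dependent_choice => s; apply: cid.
  have [/Pext[b [c [bs cs Pbc]]]|nPs] := pselect (P s).
    by exists (b |` s.1, c |` s.2)%fset => _; exists b, c.
  by exists s.
have Pf n : P (f n).
  by elim: n => [|n IH]; rewrite ?f0 //; have [b [c []]] := f_grows n IH.
have card_f n : #|` (f n).1| = n /\ #|` (f n).2| = n.
  elim: n => [|n [IH1 IH2]]; first by rewrite f0 !cardfs0.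
  have [b [c [bs cs -> _]]] := f_grows n (Pf n).
  by rewrite !cardfsU1 bs cs IH1 IH2.
have f_mono :
    {homo f : m n / (m <= n)%nat >-> (m.1 `<=` n.1)%fset && (m.2 `<=` n.2)%fset}.
  apply: homo_leq => [s|s t u /andP[st1 st2] /andP[tu1 tu2]|n].
  - by rewrite !fsubset_refl.
  - by rewrite (fsubset_trans st1) ?(fsubset_trans st2).
  - by have [b [c [_ _ -> _]]] := f_grows n (Pf n); rewrite !fsubsetU1.
exists [set b | exists n, b \in (f n).1], [set c | exists n, c \in (f n).2]; split.
- apply/infinite_set_fsetP => n; exists (f n).1; last by rewrite (card_f n).1.
  by move=> b bf; exists n.
- apply/infinite_set_fsetP => n; exists (f n).2; last by rewrite (card_f n).2.
  by move=> c cf; exists n.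
move=> b c [i bi] [j cj]; apply: (PR _ (Pf (maxn i j))).
  by have /andP[/fsubsetP-> //] := f_mono _ _ (leq_maxl i j).
by have /andP[_ /fsubsetP->] := f_mono _ _ (leq_maxr i j).
Qed.

Section FinitelyAdditive.
Variables (R : archiRealFieldType) (T : Type) (mu : set T -> R).
Hypotheses (mu0 : mu set0 = 0) (muT : mu setT <= 1).
Hypothesis muS : forall E F, E `<=` F -> mu E <= mu F.
Hypothesis muUI : forall E F, mu (E `|` F) + mu (E `&` F) = mu E + mu F.

Lemma mu_ge0 E : 0 <= mu E.
Proof. by rewrite -mu0; apply: muS. Qed.

Lemma mu_le1 E : mu E <= 1.
Proof. exact: le_trans (muS (@subsetT _ E)) muT. Qed.

Lemma muU E F : mu (E `|` F) <= mu E + mu F.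
Proof. by rewrite -muUI lerDl mu_ge0. Qed.

Variables (I : Type) (p : set_system I) (S : I -> set T).
Hypothesis pU : UltraFilter p.

Definition large (X : set T) :=
  exists2 d : R, 0 < d & p [set i | d < mu (X `&` S i)].

Lemma largeS X Y : X `<=` Y -> large X -> large Y.
Proof.
move=> XY [d d0 pd]; exists d => //; apply: filterS pd => i /lt_le_trans; apply.
by apply: muS; apply: setSI.
Qed.

Lemma large_setD_null X F : mu F = 0 -> large X -> X `\` F !=set0.
Proof.
move=> muF0 [d d0 /filter_ex[i di]]; apply: contrapT => noX.
have XF : X `&` S i `<=` F.
  by move=> x [Xx _]; apply: contrapT => Fx; apply: noX; exists x.
by have := lt_le_trans di (muS XF); rewrite muF0 ltNge (ltW d0).
Qed.

(* Each new X ∩ S h adds content > d and meets the union U built so far in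
   content <= k e. *)
Lemma almost_disjoint_union X Q d e : 0 <= e -> p Q ->
  p [set i | d < mu (X `&` S i)] ->
  (forall c, Q c -> p [set i | mu (X `&` S c `&` S i) <= e]) ->
  forall k : nat, exists U, k%:R * d - k%:R ^+ 2 * e <= mu U /\
                            p [set i | mu (U `&` S i) <= k%:R * e].
Proof.
move=> e0 pQ pd small; elim=> [|k [U [muU_ge pU_small]]].
  exists set0; rewrite !mul0r expr0n mul0r subr0 mu0; split=> //.
  by apply: filterE => i /=; rewrite set0I mu0.
have [h [Qh [/= dh Uh]]] := filter_ex (filterI pQ (filterI pd pU_small)).
exists (U `|` (X `&` S h)); split.
  have UXh : mu (U `&` (X `&` S h)) <= k%:R * e.
    by apply: le_trans Uh; apply: muS => x [? []].
  have ke0 : 0 <= k%:R * e by rewrite mulr_ge0.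
  have := muUI U (X `&` S h); rewrite -natr1 mulrDl mul1r.
  have -> : (k%:R + 1) ^+ 2 * e = k%:R ^+ 2 * e + 2 * (k%:R * e) + e by ring.
  lra.
apply: filterS (filterI pU_small (small h Qh)) => i [/= Ui Xhi].
rewrite /= setIUl -natr1 mulrDl mul1r; exact: le_trans (muU _ _) (lerD Ui Xhi).
Qed.

Lemma large_intersect X Q : large X -> p Q -> exists2 c, Q c & large (X `&` S c).
Proof.
move=> [d d0 pd] pQ; apply: contrapT => none.
have small c : Q c -> forall e, 0 < e -> p [set i | mu (X `&` S c `&` S i) <= e].
  move=> Qc e e0.
  have [pl|] := in_ultra_setVsetC [set i | e < mu (X `&` S c `&` S i)] pU.
    by case: none; exists c => //; exists e.
  by apply: filterS => i /= /negP; rewrite -leNgt.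
pose n := (Num.bound (2 / d)).+1.
have nd : 2 < n%:R * d.
  have : 2 / d < (Num.bound (2 / d))%:R by rewrite archi_boundP // divr_ge0 ?ler0n ?ltW.
  by rewrite -ltr_pdivrMr // => /lt_trans->; rewrite ?ltr_nat.
(* chosen so that n d - n^2 e = n d / 2 > 1 *)
pose e := d / (2 * n%:R).
have e0 : 0 < e by rewrite divr_gt0 // mulr_gt0.
have [U [muU_ge _]] :=
  almost_disjoint_union (ltW e0) pQ pd (fun c Qc => small c Qc e e0) n.
have : n%:R ^+ 2 * e = n%:R * d / 2 by rewrite /e; field; rewrite pnatr_eq0.
by have := mu_le1 U; lra.
Qed.

End FinitelyAdditive.

Section DensitySeq.
Variables (G : groupType) (Phi : nat -> {fset G}).
Hypothesis Phi0 : forall N, Phi N != fset0.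

Let card_Phi_gt0 N : 0 < (#|` Phi N|)%:R :> R.
Proof. by rewrite ltr0n cardfs_gt0. Qed.

(* [fratio] divides with Stdlib's [Rdiv]. *)
Let dens_seqE E N :
  dens_seq Phi E N = (#|` [fset x in Phi N | `[< E x >]]%fset|)%:R / (#|` Phi N|)%:R.
Proof. exact: RdivE. Qed.

Lemma dens_seqS E F N : E `<=` F -> dens_seq Phi E N <= dens_seq Phi F N.
Proof.
move=> EF; rewrite !dens_seqE ler_pM2r ?invr_gt0 // ler_nat.
apply/fsubset_leq_card/fsubsetP => x.
by rewrite !inE => /andP[-> /asboolP/EF/asboolP].
Qed.

Lemma dens_seq0 N : dens_seq Phi set0 N = 0.
Proof.
rewrite dens_seqE (_ : [fset _ in _ | _]%fset = fset0) ?cardfs0 ?mul0r //.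
by apply/fsetP => x; rewrite !inE asboolF ?andbF.
Qed.

Lemma dens_seqT N : dens_seq Phi setT N = 1.
Proof.
rewrite dens_seqE (_ : [fset _ in _ | _]%fset = Phi N) ?divff ?gt_eqF //.
by apply/fsetP => x; rewrite !inE asboolT ?andbT.
Qed.

Lemma dens_seq_ge0 E N : 0 <= dens_seq Phi E N.
Proof. by rewrite -(dens_seq0 N) dens_seqS. Qed.

Lemma dens_seq_le1 E N : dens_seq Phi E N <= 1.
Proof. by rewrite -(dens_seqT N) dens_seqS. Qed.

Lemma dens_seqUI E F N :
  dens_seq Phi (E `|` F) N + dens_seq Phi (E `&` F) N =
  dens_seq Phi E N + dens_seq Phi F N.
Proof.
rewrite !dens_seqE -!mulrDl -!natrD; congr (_%:R / _).
symmetry; rewrite -cardfsUI; congr (_ + _)%N; congr (size (enum_fset _)).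
  by apply/fsetP => x; rewrite !inE asbool_or andb_orr.
by apply/fsetP => x; rewrite !inE asbool_and andbACA andbb.
Qed.

Lemma dens_seq_fset (X : {fset G}) N :
  dens_seq Phi [set` X] N <= (#|` X|)%:R / (#|` Phi N|)%:R.
Proof.
rewrite dens_seqE ler_pM2r ?invr_gt0 // ler_nat.
apply/fsubset_leq_card/fsubsetP => x.
by rewrite !inE => /andP[_ /asboolP].
Qed.

Lemma cvg_dens_seq_fset (X : {fset G}) :
  (forall k : nat, \forall N \near \oo, (k < #|` Phi N|)%nat) ->
  dens_seq Phi [set` X] @ \oo --> (0 : R).
Proof.
move=> Phi_big; apply/(cvgr0Pnorm_lt (V := R^o)) => eps eps0.
have Xeps : (#|` X|)%:R / eps < (Num.bound ((#|` X|)%:R / eps))%:R.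
  by rewrite archi_boundP // divr_ge0 // ltW.
apply: filterS (Phi_big (Num.bound ((#|` X|)%:R / eps))) => N PhiN.
rewrite ger0_norm ?dens_seq_ge0 //; apply: le_lt_trans (dens_seq_fset X N) _.
rewrite ltr_pdivrMr // mulrC -ltr_pdivrMr //.
by apply: lt_trans Xeps _; rewrite ltr_nat.
Qed.

End DensitySeq.

(* If |Phi_N| <= k, a symmetric difference of relative size < 1/(k+1) is empty, so
   x T is contained in Phi_N for any x in Phi_N, which is impossible when |T| > k. *)
Lemma folner_card_unbounded (G : groupType) (Phi : nat -> {fset G}) :
  infinite_set [set: G] -> (forall N, Phi N != fset0) ->
  (forall g, (fun N => fratio (fsymdiff (frtrans (Phi N) g) (Phi N)) (Phi N))
               @ \oo --> (0 : R)) ->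
  forall k : nat, \forall N \near \oo, (k < #|` Phi N|)%nat.
Proof.
move=> Ginf Phi0 folner k.
have [T _ kT] := infinite_set_fset k.+1 Ginf.
have k1_gt0 : 0 < (k.+1)%:R^-1 :> R by rewrite invr_gt0.
have : \forall N \near \oo, forall t, t \in T ->
    fratio (fsymdiff (frtrans (Phi N) t) (Phi N)) (Phi N) < (k.+1)%:R^-1.
  by apply: filter_bigI => t _; apply: cvgr_lt _ (folner t) _ k1_gt0.
apply: filterS => N small.
rewrite ltnNge; apply/negP => PhiN_le.
have [x xPhi] := fset0Pn _ (Phi0 N).
have xT_sub : ([fset (x * t)%g | t in T] `<=` Phi N)%fset.
  apply/fsubsetP => _ /imfsetP[t tT ->].
  have := small t tT; rewrite /fratio RdivE.
  have PhiN_gt0 : 0 < (#|` Phi N|)%:R :> R by rewrite ltr0n cardfs_gt0.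
  rewrite ltr_pdivrMr // => Delta_lt.
  have : (#|` fsymdiff (frtrans (Phi N) t) (Phi N)| < 1)%nat.
    rewrite -(ltr_nat R); apply: lt_le_trans Delta_lt _.
    rewrite ler_pdivrMl // mulr1 ler_nat; exact: leqW.
  rewrite ltnS leqn0 cardfs_eq0 fsetU_eq0 fsetD_eq0 => /andP[/fsubsetP sub _].
  by apply: sub; apply: in_imfset.
have := fsubset_leq_card xT_sub; rewrite card_imfset; last exact: mulgI.
by move=> /leq_trans/(_ PhiN_le); rewrite leqNgt (leq_trans kT) ?leqnn.
Qed.

Section UltraDensity.
Variables (G : groupType) (Phi : nat -> {fset G}) (q : set_system nat).
Hypotheses (Phi0 : forall N, Phi N != fset0) (qU : UltraFilter q).

(* [lim] returns a junk value on divergent filters; cvg_udensity shows that the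
   limit exists, by compactness of [0, 1]. *)
Definition udensity (E : set G) : R := lim (dens_seq Phi E @ q).

Lemma cvg_udensity E : dens_seq Phi E @ q --> udensity E.
Proof.
have := @segment_compact R 0 1; rewrite compact_ultra => cpt01.
have [|l [_ El]] := cpt01 _ (ultra_fmap (dens_seq Phi E) qU).
  by apply: (@filterE _ q) => N /=; rewrite in_itv /= dens_seq_ge0 // dens_seq_le1.
by rewrite /udensity (cvg_lim (@Rhausdorff R) El).
Qed.

Lemma udensity_cvgn E l : eventually `<=` q ->
  dens_seq Phi E @ \oo --> l -> udensity E = l.
Proof.
move=> q_oo El; apply: (cvg_lim (@Rhausdorff R)).
by move=> P /El /q_oo.
Qed.

Lemma udensity0 : udensity set0 = 0.
Proof. by rewrite /udensity (funext (dens_seq0 Phi)) (lim_cst (@Rhausdorff R)). Qed.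

Lemma udensityT : udensity setT = 1.
Proof. by rewrite /udensity (funext (dens_seqT Phi0)) (lim_cst (@Rhausdorff R)). Qed.

Lemma udensityS E F : E `<=` F -> udensity E <= udensity F.
Proof.
move=> EF; apply: (ler_cvg_to (@cvg_udensity E) (@cvg_udensity F)).
by apply: (@filterE _ q) => N; apply: dens_seqS.
Qed.

Lemma udensityUI E F :
  udensity (E `|` F) + udensity (E `&` F) = udensity E + udensity F.
Proof.
have udensityD E' F' : udensity E' + udensity F' =
    lim ((fun N => dens_seq Phi E' N + dens_seq Phi F' N) @ q).
  apply/esym/(cvg_lim (@Rhausdorff R)).
  exact: (cvgD (V := R^o) (@cvg_udensity E') (@cvg_udensity F')).
rewrite !udensityD; congr lim; congr (_ @ q).
by apply/funext => N; apply: dens_seqUI.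
Qed.

End UltraDensity.

Section Nonprincipal.
Variables (G : groupType) (p : set_system G).
Hypotheses (pU : UltraFilter p) (pnp : nonprincipal p).

Lemma nonprincipal_fsetC (X : {fset G}) : p (~` [set` X]).
Proof.
have : p (\bigcap_(x in [set` X]) ~` [set x]).
  by apply: filter_bigI => x _; case: (in_ultra_setVsetC [set x] pU) => // /pnp.
by apply: filterS => y yX Xy; apply: (yX y Xy).
Qed.

Lemma nonprincipal_infinite : infinite_set [set: G].
Proof.
move=> /finite_fsetP[X XT]; have [x] := filter_ex (nonprincipal_fsetC X).
by rewrite -XT; apply.
Qed.

End Nonprincipal.

Section Rectangle.
Variables (G : groupType) (A : set G) (p : set_system G).
Variables (Phi : nat -> {fset G}) (q : set_system nat).
Hypotheses (pU : UltraFilter p) (pnp : nonprincipal p).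
Hypotheses (Phi0 : forall N, Phi N != fset0) (qU : UltraFilter q).
Hypothesis q_oo : eventually `<=` q.
Hypothesis Phi_big : forall k : nat, \forall N \near \oo, (k < #|` Phi N|)%nat.

Let D := ultra_rdiv A p.
Let S g := rdiv A g `&` D.
Let mu := udensity Phi q.
Let muS := udensityS Phi0 qU.
Let muT : mu setT <= 1. Proof. by rewrite /mu udensityT. Qed.

Definition right_factors (C : {fset G}) :=
  [set x | D x /\ forall c, c \in C -> A (x * c)%g].

Definition admissible (s : {fset G} * {fset G}) :=
  [/\ {in s.1 & s.2, forall b c, A (b * c)%g}, {in s.1, forall b, D b} &
      large mu p S (right_factors s.2)].

Lemma admissible0 (L : R) : (forall g, density_exists Phi (S g)) ->
  (fun g => density Phi (S g)) @ p --> L -> 0 < L -> admissible (fset0, fset0).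
Proof.
move=> Sdens SL L0; split=> //; exists (L / 2); first by rewrite divr_gt0.
apply: filterS (cvgr_gt L SL (L / 2) _) => [g /= Lg|]; last by lra.
rewrite /density -(udensity_cvgn qU q_oo (Sdens g)) in Lg.
apply: (lt_le_trans Lg); apply: muS => x [Ax Dx].
by do !split=> //; move=> c; rewrite inE.
Qed.

Lemma admissible_extend s : admissible s -> exists b c,
  [/\ b \notin s.1, c \notin s.2 & admissible (b |` s.1, c |` s.2)%fset].
Proof.
case: s => Bs Cs [BCA BD Cs_large] /=.
pose Q := [set c | c \notin Cs /\ forall b, b \in Bs -> A (b * c)%g].
have pQ : p Q.
  have BsA : p (\bigcap_(b in [set` Bs]) [set c | A (b * c)%g]).
    by apply: filter_bigI.
  apply: filterS (filterI (nonprincipal_fsetC pU pnp Cs) BsA) => c [Csc BsAc].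
  by split; [apply/negP|].
have [c [cCs cBs] cCs_large] := large_intersect (udensity0 Phi qU)
  muT muS (udensityUI Phi0 qU) pU Cs_large pQ.
have cCs_large' : large mu p S (right_factors (c |` Cs)%fset).
  apply: (largeS muS pU _ cCs_large) => x [[Dx CsA] [Axc _]]; split=> // c'.
  by rewrite !inE => /orP[/eqP->|/CsA].
have Bs0 : mu [set` Bs] = 0.
  exact: (udensity_cvgn qU q_oo (cvg_dens_seq_fset Phi0 Bs Phi_big)).
have [b [[Db bA] bBs]] := large_setD_null muS pU Bs0 cCs_large'.
exists b, c; split=> //; first exact/negP.
split=> //= [b' c' b'in c'in|b'].
  move: b'in; rewrite !inE => /orP[/eqP->|b'Bs]; first exact: bA.
  by move: c'in; rewrite !inE => /orP[/eqP->|c'Cs]; [exact: cBs|exact: BCA].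
by rewrite !inE => /orP[/eqP->|/BD].
Qed.

End Rectangle.

Theorem theorem5p2 (G : groupType) (A : set G) :
  countable [set: G] ->
  amenable G ->
  (exists (Phi : nat -> {fset G}) (p : set_system G),
     two_sided_folner Phi /\ UltraFilter p /\ nonprincipal p /\
     (forall g : G, density_exists Phi (rdiv A g `&` ultra_rdiv A p)) /\
     (exists L : R,
        (fun g : G => density Phi (rdiv A g `&` ultra_rdiv A p)) @ p --> L /\ 0 < L)) ->
  exists B C : set G,
    infinite_set B /\ infinite_set C /\
    [set (b * c)%g | b in B & c in C] `<=` A.
Proof.
move=> _ _ [Phi [p [[Phi0 [folner _]] [pU [pnp [Sdens [L [SL L0]]]]]]]].
have [q [qU q_oo]] := ultraFilterLemma eventually_filter.
have Phi_big := folner_card_unbounded (nonprincipal_infinite pU pnp) Phi0 folner.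
have [B [C [Binf Cinf BCA]]] := infinite_rectangle
  (admissible0 pU Phi0 qU q_oo Sdens SL L0)
  (fun _ '(And3 BCA _ _) => BCA)
  (admissible_extend pU pnp Phi0 qU q_oo Phi_big).
exists B, C; do 2!split=> //.
by move=> _ [b Bb [c Cc <-]]; apply: BCA.
Qed.
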